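(* The Cesàro operator $\mathcal C: VH(\mathbb D)\to VH(\mathbb D)$ is not compact, i.e. there is no $0$-neighbourhood $U$ in $VH(\mathbb D)$ such that $\mathcal C(U)$ is relatively compact in $VH(\mathbb D)$.
   Context: $\mathbb D$ is the open unit disc. Define $v(z)=1$ if $|z|\le 1-1/e$ and $v(z)=(-\log(1-|z|))^{-1}$ if $1-1/e\le|z|<1$, $v_k=v^k$, $H^\infty_{v_k}=\{f \text{ analytic on }\mathbb D:\sup_{z\in\mathbb D}v_k(z)|f(z)|<\infty\}$ normed by this sup, and $VH(\mathbb D)=\bigcup_kH^\infty_{v_k}$ with the finest locally convex topology making all inclusions continuous. The Cesàro operator is $\mathcal C f(z)=\frac1z\int_0^z\frac{f(\zeta)}{1-\zeta}\,d\zeta$ for $z\neq0$, $\mathcal Cf(0)=f(0)$. *)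

From Stdlib Require Import Reals.
From Coquelicot Require Import Coquelicot.
Open Scope R_scope.

Definition inD (z : C) : Prop := Cmod z < 1.

Definition v (z : C) : R :=
  if Rle_dec (Cmod z) (1 - / exp 1) then 1 else / (- ln (1 - Cmod z)).
Definition vk (k : nat) (z : C) : R := (v z) ^ k.

Definition analytic_D (f : C -> C) : Prop :=
  forall z, inD z -> @ex_derive C_AbsRing C_NormedModule f z.

Definition in_Hvk (k : nat) (f : C -> C) : Prop :=
  analytic_D f /\ exists M : R, forall z, inD z -> vk k z * Cmod (f z) <= M.

Definition norm_le (k : nat) (f : C -> C) (r : R) : Prop :=
  forall z, inD z -> vk k z * Cmod (f z) <= r.

Definition in_VH (f : C -> C) : Prop := exists k, in_Hvk k f.

Definition fadd (f g : C -> C) : C -> C := fun z => (f z + g z)%C.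
Definition fscal (a : C) (f : C -> C) : C -> C := fun z => (a * f z)%C.

Definition absconvex (A : (C -> C) -> Prop) : Prop :=
  forall f g a b, A f -> A g -> Cmod a + Cmod b <= 1 -> A (fadd (fscal a f) (fscal b g)).

(** 0-neighbourhoods of the inductive limit topology (finest locally convex
    topology making all inclusions H^infty_{v_k} -> VH continuous):
    U contains an absolutely convex subset A of VH whose trace on every
    H^infty_{v_k} contains a ball of that Banach space. *)
Definition zero_nbhd (U : (C -> C) -> Prop) : Prop :=
  (forall f, U f -> in_VH f) /\
  exists A : (C -> C) -> Prop,
    (forall f, A f -> U f) /\ (forall f, A f -> in_VH f) /\ absconvex A /\
    forall k, exists eps, 0 < eps /\
      forall f, in_Hvk k f -> norm_le k f eps -> A f.

Definition VH_open (W : (C -> C) -> Prop) : Prop :=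
  (forall f, W f -> in_VH f) /\
  forall f, W f -> exists U, zero_nbhd U /\ forall g, U g -> W (fadd f g).

Definition VH_closure (S : (C -> C) -> Prop) : (C -> C) -> Prop :=
  fun f => in_VH f /\
    forall W, VH_open W -> W f -> exists g, W g /\ S g.

Definition VH_compact (K : (C -> C) -> Prop) : Prop :=
  (forall f, K f -> in_VH f) /\
  forall (I : Type) (O : I -> (C -> C) -> Prop),
    (forall i, VH_open (O i)) ->
    (forall f, K f -> exists i, O i f) ->
    exists l : list I, forall f, K f -> exists i, List.In i l /\ O i f.

Definition VH_rel_compact (S : (C -> C) -> Prop) : Prop :=
  (forall f, S f -> in_VH f) /\ VH_compact (VH_closure S).

(** The Cesaro operator: Cf(z) = (1/z) int_0^z f(w)/(1-w) dw, written via the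
    parametrisation w = t z, t in [0,1]; this gives Cf(0) = f(0). *)
Definition cesaro (f : C -> C) : C -> C :=
  fun z => RInt (V := C_R_CompleteNormedModule)
             (fun t : R => f (RtoC t * z) / (1 - RtoC t * z))%C 0 1.

Definition image (T : (C -> C) -> (C -> C)) (U : (C -> C) -> Prop) : (C -> C) -> Prop :=
  fun g => exists f, U f /\ g = T f.

From Stdlib Require Import Reals Lra Lia List Factorial FunctionalExtensionality IndefiniteDescription.
From Coquelicot Require Import Coquelicot.
Open Scope R_scope.

(* Suppose [U] is a 0-neighbourhood with [cesaro U] relatively compact; [U] contains a
   ball of radius [eps k] of every [H^infty_{v_k}].  The test functions
   [c (1 - z) / (1 - r z)^2] with [r = 1 - exp (- L)] have [v_j]-norm [eps j] but
   satisfy [v_j(r) |C f (r)| >= kappa j * eps j] with [kappa j] independent of [L],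
   because [C f (r) = c / (1 - r^2)].  Placing them at points [x_j] with [v (x_j)]
   tending to 0 fast enough, the seminorm [g |-> sup_j a_j |g (x_j)|],
   [a_j = j v_j(x_j) / (kappa j * eps j)], is bounded on every [H^infty_{v_k}], hence
   continuous on [VH(D)], hence bounded on compact sets; yet it is at least [j] at
   [C f_j]. *)

(** * The weights *)

Lemma v_pos_le1 z : inD z -> 0 < v z <= 1.
Proof.
  unfold inD, v; intros Hz.
  destruct (Rle_dec (Cmod z) (1 - / exp 1)) as [_ | Hfar]; [lra |].
  assert (Hinv_e : / exp 1 = exp (- 1)) by (rewrite <- exp_Ropp; f_equal; ring).
  assert (Hln : ln (1 - Cmod z) < -1).
  { rewrite <- (ln_exp (- 1)); apply ln_increasing; lra. }
  split; [apply Rinv_0_lt_compat; lra |].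
  replace 1 with (/ 1) at 2 by apply Rinv_1.
  apply Rinv_le_contravar; lra.
Qed.

Lemma vk_pos_le1 k z : inD z -> 0 < vk k z <= 1.
Proof.
  intros Hz; destruct (v_pos_le1 z Hz); unfold vk; split.
  - now apply pow_lt.
  - rewrite <- (pow1 k); apply pow_incr; lra.
Qed.

Lemma vk_antitone k1 k2 z : (k1 <= k2)%nat -> inD z -> vk k2 z <= vk k1 z.
Proof.
  intros Hk Hz; destruct (v_pos_le1 z Hz); unfold vk.
  replace k2 with (k1 + (k2 - k1))%nat by lia; rewrite pow_add.
  assert (0 < v z ^ k1) by now apply pow_lt.
  assert (v z ^ (k2 - k1) <= 1) by (rewrite <- (pow1 (k2 - k1)); apply pow_incr; lra).
  nra.
Qed.

Lemma v_le_near_boundary L z :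
  2 < L -> 1 - exp (- (L / 2)) < Cmod z < 1 -> v z <= 2 / L.
Proof.
  intros HL Hz; unfold v.
  assert (exp (- (L / 2)) < exp (- 1)) by (apply exp_increasing; lra).
  assert (Hinv_e : / exp 1 = exp (- 1)) by (rewrite <- exp_Ropp; f_equal; ring).
  destruct (Rle_dec (Cmod z) (1 - / exp 1)); [lra |].
  assert (ln (1 - Cmod z) < - (L / 2)).
  { rewrite <- (ln_exp (- (L / 2))); apply ln_increasing; lra. }
  replace (2 / L) with (/ (L / 2)) by (field; lra).
  apply Rlt_le, Rinv_lt_contravar; nra.
Qed.

Lemma v_one_sub_exp L : 1 < L -> v (RtoC (1 - exp (- L))) = / L.
Proof.
  intros HL; unfold v.
  assert (0 < exp (- L)) by apply exp_pos.
  assert (exp (- L) < exp (- 1)) by (apply exp_increasing; lra).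
  assert (Hinv_e : / exp 1 = exp (- 1)) by (rewrite <- exp_Ropp; f_equal; ring).
  assert (exp (- 1) < 1) by (rewrite <- exp_0; apply exp_increasing; lra).
  rewrite Cmod_R, Rabs_pos_eq by lra.
  destruct (Rle_dec (1 - exp (- L)) (1 - / exp 1)); [lra |].
  replace (1 - (1 - exp (- L))) with (exp (- L)) by ring.
  rewrite ln_exp, Ropp_involutive; reflexivity.
Qed.

(** * Complex differentiability and the space VH *)

(* [analytic_D] is phrased in [C_NormedModule], whose uniform structure is the
   product one; the product and composition rules of Coquelicot live in
   [AbsRing_NormedModule C_AbsRing], so we differentiate there and transfer. *)
Definition ex_derive_C (f : C -> C) (z : C) : Prop :=
  @ex_derive C_AbsRing (AbsRing_NormedModule C_AbsRing) f z.

Lemma analytic_D_iff f : analytic_D f <-> forall z, inD z -> ex_derive_C f z.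
Proof.
  split; intros Hf z Hz; destruct (Hf z Hz) as [l [[a b [M [HM Hab]]] Hlim]];
    exists l; (split; [split; [exact a | exact b | exists M; split; assumption] |]);
    intros x Hx eps; exact (Hlim x Hx eps).
Qed.

Lemma ex_derive_C_const a z : ex_derive_C (fun _ => a) z.
Proof. exists zero; apply is_derive_const. Qed.

Lemma ex_derive_C_id z : ex_derive_C (fun t => t) z.
Proof. exists one; apply (@is_derive_id C_AbsRing). Qed.

Lemma ex_derive_C_plus f g z :
  ex_derive_C f z -> ex_derive_C g z -> ex_derive_C (fun t => f t + g t)%C z.
Proof. intros [a Ha] [b Hb]; exists (plus a b); exact (@is_derive_plus C_AbsRing (AbsRing_NormedModule C_AbsRing) f g z a b Ha Hb). Qed.

Lemma ex_derive_C_mult f g z :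
  ex_derive_C f z -> ex_derive_C g z -> ex_derive_C (fun t => f t * g t)%C z.
Proof.
  intros [a Ha] [b Hb]; eexists.
  apply (@is_derive_mult C_AbsRing f g z a b Ha Hb); intros; apply Cmult_comm.
Qed.

Lemma ex_derive_C_opp f z : ex_derive_C f z -> ex_derive_C (fun t => - f t)%C z.
Proof.
  intros Hf; destruct (ex_derive_C_mult _ f z (ex_derive_C_const (-1) z) Hf) as [l Hl].
  exists l; eapply is_derive_ext; [| exact Hl]; intros t; simpl; ring.
Qed.

Lemma is_derive_Cinv (w : C) : w <> 0%C ->
  @is_derive C_AbsRing (AbsRing_NormedModule C_AbsRing) Cinv w (- / (w * w))%C.
Proof.
  intros Hw.
  assert (Hw0 : 0 < Cmod w) by now apply Cmod_gt_0.
  split; [apply is_linear_scal_l |].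
  intros x Hx.
  apply (@is_filter_lim_locally_unique _ (AbsRing_NormedModule C_AbsRing)) in Hx; subst x.
  intros eps; apply (@locally_norm_le_locally _ (AbsRing_NormedModule C_AbsRing)).
  pose (delta := Rmin (Cmod w / 2) (eps * (Cmod w * Cmod w * Cmod w) / 2)).
  assert (Hdelta : 0 < delta).
  { apply Rmin_case; [lra |]. pose proof (cond_pos eps).
    apply Rmult_lt_0_compat; [| lra]. repeat apply Rmult_lt_0_compat; lra. }
  exists (mkposreal delta Hdelta); intros y Hy.
  change (Cmod (y - w) < delta) in Hy.
  change (Cmod ((/ y - / w) - (y - w) * (- / (w * w))) <= eps * Cmod (y - w)).
  set (d := Cmod (y - w)) in *.
  assert (Hd1 : d <= Cmod w / 2) by (apply Rlt_le, (Rlt_le_trans _ _ _ Hy), Rmin_l).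
  assert (Hd2 : d <= eps * (Cmod w * Cmod w * Cmod w) / 2)
    by (apply Rlt_le, (Rlt_le_trans _ _ _ Hy), Rmin_r).
  assert (Hy0 : Cmod w / 2 <= Cmod y).
  { assert (Cmod w <= Cmod y + Cmod (w - y)).
    { replace w with (y + (w - y))%C at 1 by ring. apply Cmod_triangle. }
    replace (w - y)%C with (- (y - w))%C in H by ring; rewrite Cmod_opp in H; fold d in H; lra. }
  assert (Hy_nz : @eq C y 0 -> False) by (intro; subst y; rewrite Cmod_0 in Hy0; lra).
  replace ((/ y - / w) - (y - w) * (- / (w * w)))%C
    with ((y - w) * (y - w) * / (w * w * y))%C by (field; split; auto).
  rewrite Cmod_mult, Cmod_inv, !Cmod_mult by (repeat apply Cmult_neq_0; auto).
  fold d; assert (0 <= d) by apply Cmod_ge_0; pose proof (cond_pos eps).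
  assert (Hww : 0 < Cmod w * Cmod w) by nra.
  apply (Rmult_le_reg_r (Cmod w * Cmod w * Cmod y)); [nra |].
  rewrite Rmult_assoc, Rinv_l by nra.
  assert (Cmod w * Cmod w * Cmod w / 2 <= Cmod w * Cmod w * Cmod y) by nra.
  assert (d <= eps * (Cmod w * Cmod w * Cmod y)) by nra.
  nra.
Qed.

Lemma ex_derive_C_inv f z :
  ex_derive_C f z -> f z <> 0%C -> ex_derive_C (fun t => / f t)%C z.
Proof. intros Hf Hz; apply ex_derive_comp; [eexists; now apply is_derive_Cinv | exact Hf]. Qed.

Lemma analytic_D_lin a b f g :
  analytic_D f -> analytic_D g -> analytic_D (fadd (fscal a f) (fscal b g)).
Proof.
  rewrite !analytic_D_iff; intros Hf Hg z Hz; unfold fadd, fscal.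
  apply ex_derive_C_plus; apply ex_derive_C_mult; auto using ex_derive_C_const.
Qed.

Lemma Cmod_lin_le (a b u w : C) :
  Cmod (a * u + b * w) <= Cmod a * Cmod u + Cmod b * Cmod w.
Proof. rewrite <- !Cmod_mult; apply Cmod_triangle. Qed.

Lemma in_VH_lin a b f g : in_VH f -> in_VH g -> in_VH (fadd (fscal a f) (fscal b g)).
Proof.
  intros [k1 [Af [M1 HM1]]] [k2 [Ag [M2 HM2]]].
  set (k := Nat.max k1 k2).
  exists k; split; [now apply analytic_D_lin |].
  exists (Cmod a * M1 + Cmod b * M2); intros z Hz; unfold fadd, fscal.
  pose proof (vk_antitone k1 k z ltac:(lia) Hz); pose proof (vk_antitone k2 k z ltac:(lia) Hz).
  pose proof (vk_pos_le1 k z Hz); specialize (HM1 z Hz); specialize (HM2 z Hz).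
  pose proof (Cmod_ge_0 a); pose proof (Cmod_ge_0 b).
  pose proof (Cmod_ge_0 (f z)); pose proof (Cmod_ge_0 (g z)).
  assert (vk k z * Cmod (f z) <= M1) by nra.
  assert (vk k z * Cmod (g z) <= M2) by nra.
  pose proof (Cmod_lin_le a b (f z) (g z)).
  nra.
Qed.

Lemma in_VH_add f g : in_VH f -> in_VH g -> in_VH (fadd f g).
Proof.
  intros Hf Hg.
  replace (fadd f g) with (fadd (fscal 1 f) (fscal 1 g)) by
    (apply functional_extensionality; intros z; unfold fadd, fscal; ring).
  now apply in_VH_lin.
Qed.

(** * Weighted point evaluations *)

Section WeightedEvaluation.

Variables (a : nat -> R) (x : nat -> C).
Hypothesis a_ge0 : forall j, 0 <= a j.
Hypothesis x_inD : forall j, inD (x j).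
Hypothesis a_dominated : forall k, exists c, 0 <= c /\ forall j, a j <= c * vk k (x j).

Definition weval_le (d : R) (f : C -> C) : Prop :=
  in_VH f /\ forall j, a j * Cmod (f (x j)) <= d.

Definition weval_lt (n : R) (f : C -> C) : Prop := exists d, d < n /\ weval_le d f.

Lemma weval_bounded_on_Hvk k :
  exists c, 0 <= c /\ forall f M j, norm_le k f M -> a j * Cmod (f (x j)) <= c * M.
Proof.
  destruct (a_dominated k) as [c [Hc Hac]]; exists c; split; [exact Hc |].
  intros f M j HM; specialize (Hac j); specialize (HM (x j) (x_inD j)).
  pose proof (Cmod_ge_0 (f (x j))); nra.
Qed.

Lemma weval_le_of_in_VH f : in_VH f -> exists d, weval_le d f.
Proof.
  intros Hf; destruct Hf as [k [Hk [M HM]]].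
  destruct (weval_bounded_on_Hvk k) as [c [_ Hc]].
  exists (c * M); split; [exists k; split; [exact Hk | now exists M] |].
  intros j; exact (Hc f M j HM).
Qed.

Lemma weval_le_zero_nbhd d : 0 < d -> zero_nbhd (weval_le d).
Proof.
  intros Hd; split; [now intros f [Hf _] |].
  exists (weval_le d); split; [easy |]; split; [now intros f [Hf _] |]; split.
  - intros f g s t [Hf Hfd] [Hg Hgd] Hst; split; [now apply in_VH_lin |].
    intros j; unfold fadd, fscal.
    pose proof (Cmod_lin_le s t (f (x j)) (g (x j))).
    specialize (Hfd j); specialize (Hgd j); pose proof (a_ge0 j).
    pose proof (Cmod_ge_0 s); pose proof (Cmod_ge_0 t).
    assert (Cmod s * (a j * Cmod (f (x j))) <= Cmod s * d) by now apply Rmult_le_compat_l.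
    assert (Cmod t * (a j * Cmod (g (x j))) <= Cmod t * d) by now apply Rmult_le_compat_l.
    nra.
  - intros k; destruct (weval_bounded_on_Hvk k) as [c [Hc Hbound]].
    exists (d / (c + 1)); split; [apply Rdiv_lt_0_compat; lra |].
    intros f Hf Hnorm; split; [now exists k |]; intros j.
    apply (Rle_trans _ _ _ (Hbound f _ j Hnorm)).
    apply (Rmult_le_reg_r (c + 1)); [lra |].
    replace (c * (d / (c + 1)) * (c + 1)) with (c * d) by (field; lra); nra.
Qed.

Lemma weval_lt_open n : VH_open (weval_lt n).
Proof.
  split; [now intros f [d [_ [Hf _]]] |].
  intros f [d [Hdn [Hf Hfd]]].
  exists (weval_le ((n - d) / 2)); split; [apply weval_le_zero_nbhd; lra |].
  intros g [Hg Hgd]; exists (d + (n - d) / 2); split; [lra |].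
  split; [now apply in_VH_add |]; intros j; unfold fadd.
  specialize (Hfd j); specialize (Hgd j); pose proof (a_ge0 j).
  pose proof (Cmod_triangle (f (x j)) (g (x j))); nra.
Qed.

Lemma weval_le_of_VH_compact K : VH_compact K -> exists M, forall f, K f -> weval_le M f.
Proof.
  intros [KVH Kcover].
  destruct (Kcover nat (fun n => weval_lt (INR n)) (fun n => weval_lt_open (INR n)))
    as [l Hl].
  { intros f Hf; destruct (weval_le_of_in_VH f (KVH f Hf)) as [d Hd].
    destruct (INR_unbounded d) as [n Hn]; exists n, d; split; [lra | exact Hd]. }
  exists (INR (list_max l)); intros f Hf.
  destruct (Hl f Hf) as [i [Hi [d [Hdi [HfVH Hfd]]]]].
  assert (Hil : (i <= list_max l)%nat).
  { assert (Hall := proj1 (list_max_le l (list_max l)) (Nat.le_refl _)).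
    now apply (proj1 (Forall_forall _ l)) with (x := i) in Hall. }
  apply le_INR in Hil; split; [exact HfVH |]; intros j; specialize (Hfd j); lra.
Qed.

End WeightedEvaluation.

Lemma le_mul_div_mul n b w m : 0 <= n -> 0 < b -> b <= w * m -> n <= n * w / b * m.
Proof.
  intros Hn Hb Hwm.
  replace (n * w / b * m) with (n * (w * m / b)) by (field; lra).
  rewrite <- (Rmult_1_r n) at 1; apply Rmult_le_compat_l; [exact Hn |].
  apply (Rmult_le_reg_r b); [exact Hb |]; unfold Rdiv.
  rewrite Rmult_assoc, Rinv_l, Rmult_1_l, Rmult_1_r by lra; exact Hwm.
Qed.

Lemma finite_family_bounded (g : nat -> R) k :
  exists c, 0 <= c /\ forall j, (j <= k)%nat -> g j <= c.
Proof.
  induction k as [| k [c [Hc Hg]]].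
  - exists (Rmax 0 (g 0%nat)); split; [apply Rmax_l |].
    intros j Hj; replace j with 0%nat by lia; apply Rmax_r.
  - exists (Rmax c (g (S k))); split; [apply (Rle_trans _ _ _ Hc), Rmax_l |].
    intros j Hj; destruct (Nat.eq_dec j (S k)) as [-> | Hjk]; [apply Rmax_r |].
    apply (Rle_trans _ c); [apply Hg; lia | apply Rmax_l].
Qed.

(* For [k < j] one has [vk j <= v * vk k], and [j * v (x j) <= b j] absorbs the
   remaining factor; the finitely many [j <= k] go into the constant. *)
Lemma weights_dominated (b : nat -> R) (x : nat -> C) :
  (forall j, 0 < b j) -> (forall j, inD (x j)) ->
  (forall j, v (x j) <= b j / (INR j + 1)) ->
  forall k, exists c, 0 <= c /\
    forall j, INR j * vk j (x j) / b j <= c * vk k (x j).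
Proof.
  intros Hb Hx Hv k.
  assert (Hjv : forall j, INR j * v (x j) <= b j).
  { intros j; specialize (Hv j); pose proof (pos_INR j).
    pose proof (v_pos_le1 _ (Hx j)); pose proof (Hb j).
    apply (Rmult_le_compat_l (INR j + 1)) in Hv; [| lra].
    replace ((INR j + 1) * (b j / (INR j + 1))) with (b j) in Hv by (field; lra).
    nra. }
  destruct (finite_family_bounded (fun j => INR j * vk j (x j) / b j / vk k (x j)) k)
    as [c [Hc Hsmall]].
  exists (c + 1); split; [lra |]; intros j.
  pose proof (Hb j); pose proof (vk_pos_le1 k (x j) (Hx j)).
  pose proof (vk_pos_le1 j (x j) (Hx j)); pose proof (pos_INR j).
  apply (Rmult_le_reg_r (b j)); [lra |]; unfold Rdiv at 1.
  rewrite Rmult_assoc, Rinv_l, Rmult_1_r by lra.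
  replace ((c + 1) * vk k (x j) * b j) with (c * (vk k (x j) * b j) + vk k (x j) * b j)
    by ring.
  assert (0 < vk k (x j) * b j) by nra.
  destruct (Compare_dec.le_lt_dec j k) as [Hjk | Hkj].
  - specialize (Hsmall j Hjk); simpl in Hsmall.
    set (A := INR j * vk j (x j)) in *.
    replace A with (A / b j / vk k (x j) * (vk k (x j) * b j)) by (field; lra).
    assert (A / b j / vk k (x j) * (vk k (x j) * b j) <= c * (vk k (x j) * b j))
      by (apply Rmult_le_compat_r; lra).
    lra.
  - assert (Hvj : vk j (x j) <= v (x j) * vk k (x j)).
    { replace (v (x j) * vk k (x j)) with (vk (S k) (x j)) by reflexivity.
      apply vk_antitone; [lia | apply Hx]. }
    specialize (Hjv j); pose proof (v_pos_le1 (x j) (Hx j)).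
    assert (INR j * vk j (x j) <= INR j * v (x j) * vk k (x j)) by nra.
    assert (INR j * v (x j) * vk k (x j) <= b j * vk k (x j))
      by (apply Rmult_le_compat_r; lra).
    assert (0 <= c * (vk k (x j) * b j)) by (apply Rmult_le_pos; lra).
    lra.
Qed.

(** * Test functions *)

(* The factor [1 - z] cancels the kernel of [cesaro], so that
   [cesaro (cesaro_test c r) r = c / (1 - r^2)] (see [cesaro_cesaro_test]). *)
Definition cesaro_test (c r : R) : C -> C :=
  fun z => (RtoC c * (1 - z) * (/ (1 - RtoC r * z) * / (1 - RtoC r * z)))%C.

Lemma Cmod_one_sub_scal_ge r z : 0 <= r <= 1 -> 1 - r * Cmod z <= Cmod (1 - RtoC r * z).
Proof.
  intros Hr.
  assert (Htri : Cmod 1 <= Cmod (1 - RtoC r * z) + Cmod (RtoC r * z)).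
  { replace (RtoC 1) with ((1 - RtoC r * z) + RtoC r * z)%C at 1 by ring.
    apply Cmod_triangle. }
  rewrite Cmod_1, Cmod_mult, Cmod_R, Rabs_pos_eq in Htri by lra; lra.
Qed.

Lemma one_sub_scal_neq0 r z : 0 <= r <= 1 -> inD z -> (1 - RtoC r * z)%C <> 0%C.
Proof.
  intros Hr Hz Hzero; pose proof (Cmod_one_sub_scal_ge r z Hr) as Hge.
  rewrite Hzero, Cmod_0 in Hge; unfold inD in Hz; pose proof (Cmod_ge_0 z); nra.
Qed.

Lemma cesaro_test_analytic c r : 0 <= r <= 1 -> analytic_D (cesaro_test c r).
Proof.
  intros Hr; apply analytic_D_iff; intros z Hz; unfold cesaro_test.
  assert (Hden : ex_derive_C (fun t => 1 - RtoC r * t)%C z).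
  { apply ex_derive_C_plus, ex_derive_C_opp, ex_derive_C_mult;
      auto using ex_derive_C_const, ex_derive_C_id. }
  apply ex_derive_C_mult; [apply ex_derive_C_mult; [apply ex_derive_C_const |] |].
  - apply ex_derive_C_plus, ex_derive_C_opp, ex_derive_C_id; apply ex_derive_C_const.
  - apply ex_derive_C_mult; apply ex_derive_C_inv; auto using one_sub_scal_neq0.
Qed.

Lemma cesaro_test_Cmod_le c r z d :
  0 < c -> 0 <= r <= 1 -> inD z -> 0 < d -> d <= 1 - r * Cmod z ->
  Cmod (cesaro_test c r z) <= c * (/ d + (1 - r) / (d * d)).
Proof.
  intros Hc Hr Hz Hd Hdz; unfold cesaro_test.
  pose proof (one_sub_scal_neq0 r z Hr Hz) as Hnz.
  pose proof (Cmod_one_sub_scal_ge r z Hr) as HD.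
  set (D := Cmod (1 - RtoC r * z)) in *.
  pose proof (Cmod_ge_0 z).
  assert (Hnum : Cmod (1 - z) <= D + (1 - r)).
  { replace (1 - z)%C with ((1 - RtoC r * z) + RtoC (r - 1) * z)%C
      by (rewrite RtoC_minus; ring).
    apply (Rle_trans _ _ _ (Cmod_triangle _ _)).
    rewrite Cmod_mult, Cmod_R, Rabs_left1 by lra; fold D; unfold inD in Hz; nra. }
  rewrite !Cmod_mult, !Cmod_inv, Cmod_R, Rabs_pos_eq by (auto; lra); fold D.
  pose proof (Cmod_ge_0 (1 - z)).
  rewrite Rmult_assoc; apply Rmult_le_compat_l; [lra |].
  apply (Rle_trans _ ((D + (1 - r)) * (/ D * / D))).
  { apply Rmult_le_compat_r; [| exact Hnum].
    apply Rmult_le_pos; left; apply Rinv_0_lt_compat; lra. }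
  replace ((D + (1 - r)) * (/ D * / D)) with (/ D + (1 - r) / (D * D)) by (field; lra).
  apply Rplus_le_compat; [apply Rinv_le_contravar; lra |].
  apply Rmult_le_compat_l; [lra |]; apply Rinv_le_contravar; nra.
Qed.

Lemma RInt_RtoC (F : R -> R) a b l :
  is_RInt F a b l -> RInt (V := C_R_CompleteNormedModule) (fun t => RtoC (F t)) a b = RtoC l.
Proof.
  intros HF.
  pose proof (is_RInt_fct_extend_pair (U := R_NormedModule) (V := R_NormedModule)
    (fun t => RtoC (F t)) a b l _ HF (is_RInt_const a b 0)) as Hpair.
  rewrite (is_RInt_unique (V := C_R_CompleteNormedModule) _ _ _ _ Hpair); unfold RtoC; f_equal.
  apply Rmult_0_r.
Qed.

Lemma cesaro_cesaro_test c r :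
  0 < r < 1 -> cesaro (cesaro_test c r) (RtoC r) = RtoC (c / (1 - r * r)).
Proof.
  intros Hr; unfold cesaro.
  assert (Hr2 : 0 < r * r < 1) by nra.
  assert (Hden : forall t, 0 <= t <= 1 -> 0 < 1 - t * (r * r)) by (intros; nra).
  rewrite (RInt_ext (V := C_R_CompleteNormedModule) _
             (fun t => RtoC (c / ((1 - t * (r * r)) * (1 - t * (r * r)))))).
  2: { intros t Ht; rewrite Rmin_left, Rmax_right in Ht by lra.
       assert (Hk : 1 - t * (r * r) <> 0) by (specialize (Hden t ltac:(lra)); lra).
       assert (Hk' : (1 - RtoC t * RtoC r)%C <> 0%C).
       { rewrite <- RtoC_mult, <- RtoC_minus; intros E; injection E; nra. }
       unfold cesaro_test; rewrite RtoC_div by (apply Rmult_integral_contrapositive; easy).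
       rewrite !RtoC_mult, !RtoC_minus, !RtoC_mult.
       assert (Hk'' : (1 - RtoC t * (RtoC r * RtoC r))%C <> 0%C).
       { rewrite <- !RtoC_mult, <- RtoC_minus; intros E; injection E; exact Hk. }
       match goal with |- ?u = ?w => change (@eq C u w) end.
       field; auto. }
  apply RInt_RtoC.
  set (G := fun t => c / (r * r) / (1 - t * (r * r))).
  replace (c / (1 - r * r)) with (minus (G 1) (G 0))
    by (unfold G, minus, plus, opp; simpl; field; lra).
  apply (is_RInt_derive G).
  - intros t Ht; rewrite Rmin_left, Rmax_right in Ht by lra; unfold G.
    pose proof (Hden t Ht); auto_derive; [lra | field; split; lra].
  - intros t Ht; rewrite Rmin_left, Rmax_right in Ht by lra.
    apply (ex_derive_continuous (K := R_AbsRing) (V := R_NormedModule)).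
    pose proof (Hden t Ht); unfold Rdiv; auto_derive; nra.
Qed.

Lemma exp_opp_mul_exp x : exp (- x) * exp x = 1.
Proof. rewrite <- exp_plus, Rplus_opp_l; apply exp_0. Qed.

Lemma cesaro_test_norm_le j c L : 2 < L -> 0 < c ->
  norm_le j (cesaro_test c (1 - exp (- L)))
    (c * (exp (L / 2) + 1 + 2 * (2 / L) ^ j * exp L)).
Proof.
  intros HL Hc z Hz.
  set (E := exp (- L)); set (q := exp (- (L / 2))).
  assert (HE : 0 < E) by apply exp_pos; assert (Hq : 0 < q) by apply exp_pos.
  assert (HEq : E = q * q) by (unfold E, q; rewrite <- exp_plus; f_equal; field).
  assert (Hq1 : q < 1) by (unfold q; rewrite <- exp_0; apply exp_increasing; lra).
  assert (HE1 : E < 1) by nra.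
  assert (HqL : q * exp (L / 2) = 1) by apply exp_opp_mul_exp.
  assert (HEL : E * exp L = 1) by apply exp_opp_mul_exp.
  assert (HT : 0 < (2 / L) ^ j) by (apply pow_lt, Rdiv_lt_0_compat; lra).
  pose proof (vk_pos_le1 j z Hz); pose proof (Cmod_ge_0 z); unfold inD in Hz.
  pose proof (Cmod_ge_0 (cesaro_test c (1 - E) z)).
  destruct (Rle_lt_dec (Cmod z) (1 - q)) as [Hnear0 | Hnear1].
  - pose proof (cesaro_test_Cmod_le c (1 - E) z q Hc ltac:(nra) Hz Hq ltac:(nra)) as Hb.
    replace (/ q + (1 - (1 - E)) / (q * q)) with (exp (L / 2) + 1) in Hb
      by (rewrite HEq; field_simplify_eq; nra).
    assert (0 <= 2 * (2 / L) ^ j * exp L) by (pose proof (exp_pos L); nra).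
    nra.
  - pose proof (cesaro_test_Cmod_le c (1 - E) z E Hc ltac:(nra) Hz HE ltac:(nra)) as Hb.
    replace (/ E + (1 - (1 - E)) / (E * E)) with (2 * exp L) in Hb
      by (field_simplify_eq; nra).
    assert (Hvk : vk j z <= (2 / L) ^ j).
    { apply pow_incr; split; [now apply Rlt_le, v_pos_le1 |].
      apply v_le_near_boundary; unfold q in Hnear1; lra. }
    assert (0 <= exp (L / 2) + 1) by (pose proof (exp_pos (L / 2)); lra).
    nra.
Qed.

Lemma vk_cesaro_cesaro_test_ge j c L : 2 < L -> 0 < c ->
  c * exp L / (2 * L ^ j) <=
  vk j (RtoC (1 - exp (- L))) *
    Cmod (cesaro (cesaro_test c (1 - exp (- L))) (RtoC (1 - exp (- L)))).
Proof.
  intros HL Hc.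
  unfold vk; rewrite v_one_sub_exp by lra.
  set (E := exp (- L)).
  assert (HE : 0 < E) by apply exp_pos.
  assert (HEL : E * exp L = 1) by apply exp_opp_mul_exp.
  assert (HE1 : E < 1) by (unfold E; rewrite <- exp_0; apply exp_increasing; lra).
  assert (HP : 0 < L ^ j) by (apply pow_lt; lra).
  rewrite cesaro_cesaro_test, Cmod_R, Rabs_pos_eq by (try apply Rdiv_le_0_compat; nra).
  rewrite pow_inv.
  replace (c * exp L / (2 * L ^ j)) with (/ L ^ j * (c / (2 * E)))
    by (field_simplify_eq; [nra | lra]).
  apply Rmult_le_compat_l; [left; now apply Rinv_0_lt_compat |].
  apply Rmult_le_compat_l; [lra |]; apply Rinv_le_contravar; nra.
Qed.

Lemma pow_le_fact_mul_exp j x : 0 <= x -> x ^ j <= INR (fact j) * exp x.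
Proof.
  intros Hx; pose proof (exp_ge_taylor x j Hx) as Htaylor.
  pose proof (INR_fact_lt_0 j).
  assert (Hterm : x ^ j / INR (fact j) <= sum_f_R0 (fun k => x ^ k / INR (fact k)) j).
  { destruct j as [| j]; simpl; [lra |].
    enough (0 <= sum_f_R0 (fun k => x ^ k / INR (fact k)) j) by lra.
    apply cond_pos_sum; intros k.
    apply Rdiv_le_0_compat; [now apply pow_le | apply INR_fact_lt_0]. }
  replace (x ^ j) with (INR (fact j) * (x ^ j / INR (fact j))) by (field; lra).
  apply Rmult_le_compat_l; lra.
Qed.

(* A lower bound for [vk j * |cesaro f|] relative to [||f||_{vk j}] that is
   uniform in the position [1 - exp (- L)] of the test function. *)
Definition kappa (j : nat) : R := / (4 * 2 ^ j * (INR (fact j) + 1)).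

Lemma kappa_pos j : 0 < kappa j.
Proof.
  apply Rinv_0_lt_compat; pose proof (INR_fact_lt_0 j); pose proof (pow_lt 2 j).
  apply Rmult_lt_0_compat; lra.
Qed.

Lemma kappa_mul_le j L : 2 < L ->
  kappa j * (exp (L / 2) + 1 + 2 * (2 / L) ^ j * exp L) <= exp L / (2 * L ^ j).
Proof.
  intros HL.
  set (K := 4 * 2 ^ j * (INR (fact j) + 1)).
  pose proof (pow_lt 2 j); pose proof (INR_fact_lt_0 j).
  assert (HK : 0 < K) by (unfold K; nra).
  assert (HP : 0 < L ^ j) by (apply pow_lt; lra).
  pose proof (exp_pos (L / 2)) as Hh.
  assert (Hhh : exp (L / 2) * exp (L / 2) = exp L) by (rewrite <- exp_plus; f_equal; field).
  assert (Hh1 : 1 <= exp (L / 2)) by (rewrite <- exp_0; apply Rlt_le, exp_increasing; lra).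
  assert (HLj : L ^ j <= 2 ^ j * INR (fact j) * exp (L / 2)).
  { replace (L ^ j) with (2 ^ j * (L / 2) ^ j) by (rewrite <- Rpow_mult_distr; f_equal; field).
    rewrite Rmult_assoc; apply Rmult_le_compat_l; [lra |].
    apply pow_le_fact_mul_exp; lra. }
  assert (H2L : (2 / L) ^ j * L ^ j = 2 ^ j)
    by (rewrite <- Rpow_mult_distr; f_equal; field; lra).
  unfold kappa; fold K.
  apply (Rmult_le_reg_r (K * (2 * L ^ j))); [nra |].
  replace (/ K * (exp (L / 2) + 1 + 2 * (2 / L) ^ j * exp L) * (K * (2 * L ^ j)))
    with (2 * exp (L / 2) * L ^ j + 2 * L ^ j + 4 * ((2 / L) ^ j * L ^ j) * exp L)
    by (field; lra).
  replace (exp L / (2 * L ^ j) * (K * (2 * L ^ j))) with (K * exp L) by (field; lra).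
  rewrite H2L; unfold K.
  nra.
Qed.

Lemma cesaro_test_function j eps y : 0 < eps -> 0 < y ->
  exists r f, inD (RtoC r) /\ in_Hvk j f /\ norm_le j f eps /\ v (RtoC r) <= y /\
    eps * kappa j <= vk j (RtoC r) * Cmod (cesaro f (RtoC r)).
Proof.
  intros Heps Hy.
  set (L := 3 + / y); assert (HL : 2 < L) by (pose proof (Rinv_0_lt_compat y Hy); unfold L; lra).
  set (N := exp (L / 2) + 1 + 2 * (2 / L) ^ j * exp L).
  assert (HN : 0 < N).
  { pose proof (exp_pos (L / 2)); pose proof (exp_pos L).
    assert (0 < (2 / L) ^ j) by (apply pow_lt, Rdiv_lt_0_compat; lra).
    unfold N; nra. }
  set (c := eps / N); assert (Hc : 0 < c) by now apply Rdiv_lt_0_compat.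
  assert (HcN : c * N = eps) by (unfold c; field; lra).
  assert (HE : 0 < exp (- L) < 1) by (split; [apply exp_pos | rewrite <- exp_0; apply exp_increasing; lra]).
  assert (Hnorm := cesaro_test_norm_le j c L HL Hc); fold N in Hnorm; rewrite HcN in Hnorm.
  exists (1 - exp (- L)), (cesaro_test c (1 - exp (- L))); repeat split.
  - unfold inD; rewrite Cmod_R, Rabs_pos_eq; lra.
  - apply cesaro_test_analytic; lra.
  - now exists eps.
  - exact Hnorm.
  - rewrite v_one_sub_exp by lra.
    rewrite <- (Rinv_inv y); apply Rinv_le_contravar; [now apply Rinv_0_lt_compat | unfold L; lra].
  - apply (Rle_trans _ (c * exp L / (2 * L ^ j))); [| now apply vk_cesaro_cesaro_test_ge].
    assert (Hkappa := kappa_mul_le j L HL); fold N in Hkappa.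
    rewrite <- HcN; unfold Rdiv; rewrite Rmult_assoc, (Rmult_comm N), (Rmult_assoc c).
    apply Rmult_le_compat_l; [lra | exact Hkappa].
Qed.

Lemma cesaro_test_sequence (eps y : nat -> R) :
  (forall j, 0 < eps j) -> (forall j, 0 < y j) ->
  exists (x : nat -> C) (f : nat -> C -> C), forall j,
    inD (x j) /\ in_Hvk j (f j) /\ norm_le j (f j) (eps j) /\ v (x j) <= y j /\
    eps j * kappa j <= vk j (x j) * Cmod (cesaro (f j) (x j)).
Proof.
  intros Heps Hy.
  destruct (functional_choice (fun j (p : R * (C -> C)) =>
      inD (RtoC (fst p)) /\ in_Hvk j (snd p) /\ norm_le j (snd p) (eps j) /\
      v (RtoC (fst p)) <= y j /\
      eps j * kappa j <= vk j (RtoC (fst p)) * Cmod (cesaro (snd p) (RtoC (fst p)))))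
    as [p Hp].
  { intros j; destruct (cesaro_test_function j (eps j) (y j) (Heps j) (Hy j)) as [r [f Hrf]].
    now exists (r, f). }
  now exists (fun j => RtoC (fst (p j))), (fun j => snd (p j)).
Qed.

Theorem corollary2p5 :
  ~ exists U : (C -> C) -> Prop, zero_nbhd U /\ VH_rel_compact (image cesaro U).
Proof.
  intros [U [[_ [A [AU [_ [_ Aball]]]]] [imageVH Kcompact]]].
  destruct (functional_choice _ Aball) as [eps Heps].
  set (b := fun j => eps j * kappa j).
  assert (Hb : forall j, 0 < b j).
  { intros j; apply Rmult_lt_0_compat; [apply Heps | apply kappa_pos]. }
  destruct (cesaro_test_sequence eps (fun j => b j / (INR j + 1))) as [x [f Hxf]].
  { apply Heps. }
  { intros j; pose proof (pos_INR j); apply Rdiv_lt_0_compat; [apply Hb | lra]. }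
  assert (Hx : forall j, inD (x j)) by apply Hxf.
  set (a := fun j => INR j * vk j (x j) / b j).
  assert (Ha : forall j, 0 <= a j).
  { intros j; pose proof (vk_pos_le1 j _ (Hx j)); pose proof (pos_INR j).
    apply Rdiv_le_0_compat; [nra | apply Hb]. }
  assert (Hdom := weights_dominated b x Hb Hx (fun j => proj1 (proj2 (proj2 (proj2 (Hxf j)))))).
  destruct (weval_le_of_VH_compact a x Ha Hx Hdom _ Kcompact) as [M HM].
  destruct (INR_unbounded M) as [N HN].
  destruct (Hxf N) as [_ [HfN [HfN_small [_ HfN_large]]]].
  destruct (HM (cesaro (f N))) as [_ HMN].
  { assert (Him : image cesaro U (cesaro (f N))).
    { exists (f N); split; [apply AU, (proj2 (Heps N)); assumption | reflexivity]. }
    split; [now apply imageVH | intros W _ HW; now exists (cesaro (f N))]. }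
  specialize (HMN N).
  assert (INR N <= a N * Cmod (cesaro (f N) (x N)))
    by (apply le_mul_div_mul; [apply pos_INR | apply Hb | exact HfN_large]).
  lra.
Qed.
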